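(* Consider a tripartite scenario with parties Alice, Bob and Charlie, each having three $\pm1$-valued observables $A_1,A_2,A_3$, $B_1,B_2,B_3$, $C_1,C_2,C_3$ respectively. Define $$\mathcal{I}_{AB}=\langle A_1B_1\rangle-\langle A_1B_2\rangle-\langle A_1B_3\rangle+\langle A_2B_1\rangle+\langle A_2B_2\rangle-\langle A_2B_3\rangle+\langle A_3B_1\rangle+\langle A_3B_2\rangle+\langle A_3B_3\rangle,$$ and let $\mathcal{I}_{AC}$ be the same expression with each $B_j$ replaced by $C_j$. Then $\mathcal{I}_{AB}\le 5$ in any local hidden variable model, the maximal no-signaling value of $\mathcal{I}_{AB}$ is $9$, and every tripartite no-signaling behaviour satisfies the tight monogamy relation $$\mathcal{I}_{AB}+\mathcal{I}_{AC}\le 10 .$$ Moreover, this monogamy relation does not arise from a chordal decomposition of the commutation graph, in the following sense. Let $G$ be the graph on the nine observables in which two observables are adjacent iff they belong to different parties, and regard the left-hand side $\mathcal{I}_{AB}+\mathcal{I}_{AC}$ as a set of $18$ signed terms $s\,\langle XY\rangle$ with $s\in\{\pm1\}$ and $\{X,Y\}$ an edge of $G$. There is no partition of these $18$ terms into groups $T_1,\dots,T_r$ such that, with $S_j$ the set of observables occurring in the terms of $T_j$, every induced subgraph $G[S_j]$ is chordal and $$\sum_{j=1}^r\ \max_{x\in\{\pm1\}^{S_j}}\ \sum_{s\langle XY\rangle\in T_j} s\,x_Xx_Y=10 .$$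
   Context: A no-signaling behaviour is a family of joint distributions of the outcomes of $(A_i,B_j,C_k)$ for all inputs $i,j,k$, such that the marginal distribution of any subset of the parties does not depend on the inputs of the remaining parties; $\langle XY\rangle$ is the expectation of the product of the outcomes. ''Tight'' means the bound $10$ is attained by some no-signaling behaviour. A graph is chordal if every cycle of length at least four has a chord, i.e. an edge joining two non-consecutive vertices of the cycle. *)

From HB Require Import structures.
From mathcomp Require Import all_boot all_order all_algebra.
Set Implicit Arguments. Unset Strict Implicit. Unset Printing Implicit Defensive.
Import Order.TTheory GRing.Theory Num.Theory.
Local Open Scope ring_scope.

(* Outcomes of +-1 valued observables are encoded as bools: true = +1, false = -1.
   Inputs (measurement settings) are 'I_3 : index 0,1,2 stands for A_1,A_2,A_3 etc. *)

Definition sgnb {R : ringType} (b : bool) : R := if b then 1 else -1.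

(* Sign of the term <A_(i+1) B_(j+1)> in I_AB (0-indexed i, j):
   row A1: + - - ; row A2: + + - ; row A3: + + + ; i.e. + iff j <= i. *)
Definition coefI {R : ringType} (i j : 'I_3) : R := if (j <= i)%N then 1 else -1.

Definition behav2 (R : realFieldType) := 'I_3 -> 'I_3 -> bool -> bool -> R.

Definition is_prob2 (R : realFieldType) (P : behav2 R) : Prop :=
  (forall x y a b, 0 <= P x y a b) /\
  (forall x y, \sum_(a : bool) \sum_(b : bool) P x y a b = 1).

Definition nosig2 (R : realFieldType) (P : behav2 R) : Prop :=
  is_prob2 P /\
  (forall x y y' a, \sum_(b : bool) P x y a b = \sum_(b : bool) P x y' a b) /\
  (forall x x' y b, \sum_(a : bool) P x y a b = \sum_(a : bool) P x' y a b).

Definition lhv2 (R : realFieldType) (P : behav2 R) : Prop :=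
  exists (L : finType) (p : L -> R) (PA PB : L -> 'I_3 -> bool -> R),
    (forall l, 0 <= p l) /\ \sum_(l : L) p l = 1 /\
    (forall l x a, 0 <= PA l x a) /\ (forall l x, \sum_(a : bool) PA l x a = 1) /\
    (forall l y b, 0 <= PB l y b) /\ (forall l y, \sum_(b : bool) PB l y b = 1) /\
    (forall x y a b, P x y a b = \sum_(l : L) p l * PA l x a * PB l y b).

Definition corr2 (R : realFieldType) (P : behav2 R) (x y : 'I_3) : R :=
  \sum_(a : bool) \sum_(b : bool) sgnb a * sgnb b * P x y a b.

Definition I2 (R : realFieldType) (P : behav2 R) : R :=
  \sum_(i : 'I_3) \sum_(j : 'I_3) coefI i j * corr2 P i j.

Definition behav3 (R : realFieldType) := 'I_3 -> 'I_3 -> 'I_3 -> bool -> bool -> bool -> R.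

Definition is_prob3 (R : realFieldType) (P : behav3 R) : Prop :=
  (forall x y z a b c, 0 <= P x y z a b c) /\
  (forall x y z, \sum_(a : bool) \sum_(b : bool) \sum_(c : bool) P x y z a b c = 1).

Definition nosig3 (R : realFieldType) (P : behav3 R) : Prop :=
  is_prob3 P /\
  (forall x y z z' a b, \sum_(c : bool) P x y z a b c = \sum_(c : bool) P x y z' a b c) /\
  (forall x y y' z a c, \sum_(b : bool) P x y z a b c = \sum_(b : bool) P x y' z a b c) /\
  (forall x x' y z b c, \sum_(a : bool) P x y z a b c = \sum_(a : bool) P x' y z a b c) /\
  (forall x y y' z z' a, \sum_(b : bool) \sum_(c : bool) P x y z a b c
                       = \sum_(b : bool) \sum_(c : bool) P x y' z' a b c) /\
  (forall x x' y z z' b, \sum_(a : bool) \sum_(c : bool) P x y z a b c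
                       = \sum_(a : bool) \sum_(c : bool) P x' y z' a b c) /\
  (forall x x' y y' z c, \sum_(a : bool) \sum_(b : bool) P x y z a b c
                       = \sum_(a : bool) \sum_(b : bool) P x' y' z a b c).

(* <A_x B_y> and <A_x C_z>, computed from the two-party marginals; by no-signaling
   the value does not depend on the (here fixed to index 0) input of the third party. *)
Definition corrAB3 (R : realFieldType) (P : behav3 R) (x y : 'I_3) : R :=
  \sum_(a : bool) \sum_(b : bool) \sum_(c : bool) sgnb a * sgnb b * P x y ord0 a b c.

Definition corrAC3 (R : realFieldType) (P : behav3 R) (x z : 'I_3) : R :=
  \sum_(a : bool) \sum_(b : bool) \sum_(c : bool) sgnb a * sgnb c * P x ord0 z a b c.

Definition IAB3 (R : realFieldType) (P : behav3 R) : R :=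
  \sum_(i : 'I_3) \sum_(j : 'I_3) coefI i j * corrAB3 P i j.

Definition IAC3 (R : realFieldType) (P : behav3 R) : R :=
  \sum_(i : 'I_3) \sum_(j : 'I_3) coefI i j * corrAC3 P i j.

(* observables: (party, index), party 0 = Alice, 1 = Bob, 2 = Charlie *)
Definition obs := ('I_3 * 'I_3)%type.

Definition adjG : rel obs := fun u v => u.1 != v.1.

Definition chordal_on (S : {set obs}) : Prop :=
  forall c : seq obs, uniq c -> (4 <= size c)%N -> {subset c <= S} -> cycle adjG c ->
    exists i j : nat, [/\ (i < j)%N, (j < size c)%N, j != i.+1,
                          ~~ ((i == 0%N) && (j == (size c).-1)) &
                          adjG (nth (ord0, ord0) c i) (nth (ord0, ord0) c j)].

(* the 18 terms of I_AB + I_AC: (false, i, j) is the term coefI i j <A_i B_j>,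
   (true, i, j) is the term coefI i j <A_i C_j> *)
Definition term := (bool * 'I_3 * 'I_3)%type.

Definition term_obsA (t : term) : obs := (ord0, t.1.2).
Definition term_obs2 (t : term) : obs :=
  (if t.1.1 then (inord 2 : 'I_3) else (inord 1 : 'I_3), t.2).

Definition obs_of (T : {set term}) : {set obs} :=
  \bigcup_(t in T) [set term_obsA t; term_obs2 t].

Definition group_val (T : {set term}) (x : obs -> bool) : int :=
  \sum_(t in T) coefI t.1.2 t.2 * sgnb (x (term_obsA t)) * sgnb (x (term_obs2 t)).

(* m is the maximum over +-1 assignments of the group's value.  Only observables
   in obs_of T occur, so maximizing over global assignments equals maximizing
   over assignments in {+-1}^{S_j}. *)
Definition is_group_max (T : {set term}) (m : int) : Prop :=
  (exists x : {ffun obs -> bool}, group_val T x = m) /\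
  (forall x : {ffun obs -> bool}, group_val T x <= m).

(** The local bound holds because [I_AB] is bilinear in the response vectors of Alice
    and Bob, so after conditioning on the hidden variable it is enough to maximise
    [sum_i |sum_j c_ij v_j|] over the cube.  The no-signaling bound is termwise and is
    attained by the PR box.

    For the monogamy relation, [(1 - s a b)(1 - t a c) >= 0] for [+-1]-valued [a, b, c]
    gives [s <A B> + t <A C> - s t <B C> <= 1] for every choice of settings; fourteen
    of these inequalities, weighted so that all Bob-Charlie correlators cancel,
    together with two trivial bounds add up to [I_AB + I_AC <= 10].

    For the last claim, an induced square [A_r X A_r' X'] with [X, X'] settings of the
    same party is a chordless 4-cycle.  Hence a chordal group either uses a single
    setting of Alice, and is then a star whose terms can all be satisfied, or a single
    setting [B_j] and [C_k], where the only frustration comes from pairs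
    [<A_r B_j>, <A_r C_k>] and costs at most 2, and only if the group contains two
    terms of the column [<A_. B_j>].  At most three groups can do so, so the maxima
    sum to at least [18 - 6 > 10]. *)

From HB Require Import structures.
From mathcomp Require Import all_boot all_order all_algebra.
From mathcomp Require Import ring lra zify.
Import Order.TTheory GRing.Theory Num.Theory.
Local Open Scope ring_scope.
Set Implicit Arguments. Unset Strict Implicit.

Notation o1 := (@Ordinal 3 1 isT).
Notation o2 := (@Ordinal 3 2 isT).

Lemma sum_ord3 (V : nmodType) (F : 'I_3 -> V) : \sum_(i < 3) F i = F ord0 + F o1 + F o2.
Proof.
rewrite !big_ord_recl big_ord0 addr0 addrA.
by congr (_ + F _ + F _); apply/val_inj.
Qed.

Section Bipartite.
Variable R : realFieldType.

Definition expect2 (P : behav2 R) x y (f : bool -> bool -> R) : R :=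
  \sum_(a : bool) \sum_(b : bool) f a b * P x y a b.

Lemma expect2Z (P : behav2 R) x y k f :
  k * expect2 P x y f = expect2 P x y (fun a b => k * f a b).
Proof.
rewrite /expect2 mulr_sumr; apply: eq_bigr => a _.
by rewrite mulr_sumr; apply: eq_bigr => b _; rewrite mulrA.
Qed.

Lemma expect2_le (P : behav2 R) x y f k : is_prob2 P ->
  (forall a b, f a b <= k) -> expect2 P x y f <= k.
Proof.
move=> [P_ge0 P_sum1] f_le; rewrite -[leRHS]mulr1 -(P_sum1 x y) !mulr_sumr.
apply: ler_sum => a _; rewrite mulr_sumr; apply: ler_sum => b _.
exact: ler_wpM2r.
Qed.

Lemma coefI_corr2_le1 (P : behav2 R) x y : is_prob2 P -> coefI x y * corr2 P x y <= 1.
Proof.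
move=> probP; rewrite expect2Z; apply: expect2_le => // a b.
by rewrite /coefI; case: ifP; case: a; case: b => _ /=; lra.
Qed.

Lemma nosig2_I2_le9 (P : behav2 R) : nosig2 P -> I2 P <= 9.
Proof.
move=> [probP _]; apply: (@le_trans _ _ (\sum_(i < 3) \sum_(j < 3) (1 : R))).
  by apply: ler_sum => i _; apply: ler_sum => j _; exact: coefI_corr2_le1.
by rewrite !sumr_const !card_ord -mulrnA.
Qed.

Lemma bilinear_I_le5 (u v : 'I_3 -> R) :
    (forall i, -1 <= u i <= 1) -> (forall j, -1 <= v j <= 1) ->
  \sum_i \sum_j coefI i j * u i * v j <= 5.
Proof.
have le_abs (w c : R) : -1 <= w <= 1 -> w * c <= c \/ w * c <= - c.
  by move=> /andP[? ?]; case: (lerP 0 c) => ?; [left|right]; nra.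
move=> u_bound v_bound; rewrite !sum_ord3 /coefI /=.
have /andP[? ?] := v_bound ord0; have /andP[? ?] := v_bound o1.
have /andP[? ?] := v_bound o2.
have [?|?] := le_abs _ (v ord0 - v o1 - v o2) (u_bound ord0);
have [?|?] := le_abs _ (v ord0 + v o1 - v o2) (u_bound o1);
have [?|?] := le_abs _ (v ord0 + v o1 + v o2) (u_bound o2); lra.
Qed.

Lemma lhv2_I2_le5 (P : behav2 R) : lhv2 P -> I2 P <= 5.
Proof.
move=> [L [p [PA [PB [p_ge0 [p_sum1 [PA_ge0 [PA_sum1 [PB_ge0 [PB_sum1 P_lhv]]]]]]]]]].
pose EA l x := PA l x true - PA l x false.
pose EB l y := PB l y true - PB l y false.
have corr_lhv x y : corr2 P x y = \sum_l p l * EA l x * EB l y.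
  rewrite /corr2 !big_bool /= !P_lhv !mulr_sumr -!big_split /=.
  by apply: eq_bigr => l _; rewrite /EA /EB; ring.
have -> : I2 P = \sum_l p l * \sum_i \sum_j coefI i j * EA l i * EB l j.
  rewrite /I2; under [RHS]eq_bigr => l _ do rewrite !sum_ord3.
  rewrite !sum_ord3 !corr_lhv !mulr_sumr -!big_split /=.
  by apply: eq_bigr => l _; ring.
have local_bound (Q : L -> 'I_3 -> bool -> R) :
    (forall l x a, 0 <= Q l x a) -> (forall l x, \sum_a Q l x a = 1) ->
  forall l x, -1 <= Q l x true - Q l x false <= 1.
  move=> Q_ge0 Q_sum1 l x; have := Q_sum1 l x; rewrite big_bool /= => ?.
  by have := Q_ge0 l x true; have := Q_ge0 l x false => *; apply/andP; split; lra.
apply: (@le_trans _ _ (\sum_l p l * 5)).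
  apply: ler_sum => l _; apply: ler_wpM2l => //.
  by apply: bilinear_I_le5; apply: local_bound.
by rewrite -mulr_suml p_sum1 mul1r.
Qed.

Definition PRbox : behav2 R :=
  fun x y a b => if (a == b) == (y <= x)%N then 1 / 2 else 0.

Lemma PRbox_nosig2 : nosig2 PRbox.
Proof.
split; [split|split].
- by move=> x y a b; rewrite /PRbox; case: ifP => _ //; lra.
- by move=> x y; rewrite /PRbox !big_bool /=; case: (y <= x)%N => /=; lra.
- move=> x y y' a; rewrite /PRbox !big_bool /=.
  by case: a; case: (y <= x)%N; case: (y' <= x)%N => /=; lra.
- move=> x x' y b; rewrite /PRbox !big_bool /=.
  by case: b; case: (y <= x)%N; case: (y <= x')%N => /=; lra.
Qed.

Lemma PRbox_I2 : I2 PRbox = 9.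
Proof.
have term1 x y : coefI x y * corr2 PRbox x y = 1.
  by rewrite /coefI /corr2 /PRbox !big_bool /=; case: (y <= x)%N => /=; lra.
by rewrite /I2 !sum_ord3 !term1; lra.
Qed.

End Bipartite.

Lemma sgnb_triangle (R : realFieldType) (s t a b c : bool) :
  sgnb s * (sgnb a * sgnb b) + sgnb t * (sgnb a * sgnb c)
    - sgnb s * sgnb t * (sgnb b * sgnb c) <= 1 :> R.
Proof. by case: s; case: t; case: a; case: b; case: c => /=; lra. Qed.

(* Weight 1 on the triangles (0,0,1), (0,1,0) and on the bounds for [ab 0 2], [ac 0 2];
   weight 1/2 on the six triangles [(x,y,z)], [y != z], of each of rows 1 and 2. *)
Lemma monogamy_certificate (R : realFieldType) (ab ac bc : 'I_3 -> 'I_3 -> R) :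
    (forall x y z, coefI x y * ab x y + coefI x z * ac x z
                     - coefI x y * coefI x z * bc y z <= 1) ->
    (forall x y, -1 <= ab x y) -> (forall x z, -1 <= ac x z) ->
  \sum_i \sum_j coefI i j * ab i j + \sum_i \sum_j coefI i j * ac i j <= 10.
Proof.
move=> triangle ab_ge ac_ge.
have := ab_ge ord0 o2; have := ac_ge ord0 o2.
have := triangle ord0 ord0 o1; have := triangle ord0 o1 ord0.
have := triangle o1 ord0 o1; have := triangle o1 ord0 o2; have := triangle o1 o1 ord0.
have := triangle o1 o1 o2; have := triangle o1 o2 ord0; have := triangle o1 o2 o1.
have := triangle o2 ord0 o1; have := triangle o2 ord0 o2; have := triangle o2 o1 ord0.
have := triangle o2 o1 o2; have := triangle o2 o2 ord0; have := triangle o2 o2 o1.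
rewrite !sum_ord3 /coefI /=; lra.
Qed.

Section Tripartite.
Variables (R : realFieldType) (P : behav3 R).

Definition expect3 x y z (f : bool -> bool -> bool -> R) : R :=
  \sum_(a : bool) \sum_(b : bool) \sum_(c : bool) f a b c * P x y z a b c.

Definition corrBC3 y z : R := expect3 ord0 y z (fun _ b c => sgnb b * sgnb c).

Lemma expect3Z x y z k f :
  k * expect3 x y z f = expect3 x y z (fun a b c => k * f a b c).
Proof.
rewrite /expect3 mulr_sumr; apply: eq_bigr => a _; rewrite mulr_sumr.
by apply: eq_bigr => b _; rewrite mulr_sumr; apply: eq_bigr => c _; rewrite mulrA.
Qed.

Lemma expect3D x y z f g :
  expect3 x y z f + expect3 x y z g = expect3 x y z (fun a b c => f a b c + g a b c).
Proof.
rewrite /expect3 -big_split; apply: eq_bigr => a _; rewrite -big_split.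
by apply: eq_bigr => b _; rewrite -big_split; apply: eq_bigr => c _; rewrite mulrDl.
Qed.

Lemma expect3_le x y z f k : is_prob3 P ->
  (forall a b c, f a b c <= k) -> expect3 x y z f <= k.
Proof.
move=> [P_ge0 P_sum1] f_le; rewrite -[leRHS]mulr1 -(P_sum1 x y z) !mulr_sumr.
apply: ler_sum => a _; rewrite mulr_sumr; apply: ler_sum => b _.
by rewrite mulr_sumr; apply: ler_sum => c _; exact: ler_wpM2r.
Qed.

Hypothesis nosigP : nosig3 P.

Lemma expect3_AB x y z z' (g : bool -> bool -> R) :
  expect3 x y z (fun a b _ => g a b) = expect3 x y z' (fun a b _ => g a b).
Proof.
have [_ [nsAB _]] := nosigP.
rewrite /expect3; apply: eq_bigr => a _; apply: eq_bigr => b _.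
by rewrite -!mulr_sumr (nsAB x y z z').
Qed.

Lemma expect3_AC x y y' z (g : bool -> bool -> R) :
  expect3 x y z (fun a _ c => g a c) = expect3 x y' z (fun a _ c => g a c).
Proof.
have [_ [_ [nsAC _]]] := nosigP.
rewrite /expect3; apply: eq_bigr => a _; rewrite exchange_big [RHS]exchange_big.
by apply: eq_bigr => c _; rewrite -!mulr_sumr (nsAC x y y' z).
Qed.

Lemma expect3_BC x x' y z (g : bool -> bool -> R) :
  expect3 x y z (fun _ b c => g b c) = expect3 x' y z (fun _ b c => g b c).
Proof.
have [_ [_ [_ [nsBC _]]]] := nosigP.
rewrite /expect3 exchange_big [RHS]exchange_big; apply: eq_bigr => b _.
rewrite exchange_big [RHS]exchange_big; apply: eq_bigr => c _.
by rewrite -!mulr_sumr (nsBC x x' y z).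
Qed.

Lemma nosig3_triangle x y z :
  coefI x y * corrAB3 P x y + coefI x z * corrAC3 P x z
    - coefI x y * coefI x z * corrBC3 y z <= 1.
Proof.
have -> : corrAB3 P x y = expect3 x y z (fun a b _ => sgnb a * sgnb b).
  exact: (expect3_AB _ _ ord0 z (fun a b => sgnb a * sgnb b)).
have -> : corrAC3 P x z = expect3 x y z (fun a _ c => sgnb a * sgnb c).
  exact: (expect3_AC _ ord0 y _ (fun a c => sgnb a * sgnb c)).
rewrite /corrBC3 (expect3_BC ord0 x y z (fun b c => sgnb b * sgnb c)).
rewrite -mulNr !expect3Z !expect3D; apply: expect3_le; first by case: nosigP.
by move=> a b c; rewrite mulNr; exact: sgnb_triangle.
Qed.

Lemma nosig3_corr_ge x y : -1 <= corrAB3 P x y /\ -1 <= corrAC3 P x y.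
Proof.
have probP : is_prob3 P by case: nosigP.
by split; rewrite lerNl -mulN1r expect3Z; apply: expect3_le => // a b c;
  case: a; case: b; case: c => /=; lra.
Qed.

Lemma nosig3_IAB_IAC_le10 : IAB3 P + IAC3 P <= 10.
Proof.
apply: (@monogamy_certificate _ _ _ corrBC3); first exact: nosig3_triangle.
- by move=> x y; case: (nosig3_corr_ge x y).
- by move=> x z; case: (nosig3_corr_ge x z).
Qed.

End Tripartite.

Definition detbox3 (R : realFieldType) : behav3 R :=
  fun x y z a b c => if [&& a == (x != ord0), b & c] then 1 else 0.

Lemma detbox3_nosig3 (R : realFieldType) : nosig3 (@detbox3 R).
Proof.
split; [split|].
- by move=> x y z a b c; rewrite /detbox3; case: ifP.
- by move=> x y z; rewrite /detbox3 !big_bool; case: (x != ord0) => /=; lra.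
split; [by []|split; [by []|split]].
- move=> x x' y z b c; rewrite /detbox3 !big_bool.
  by case: (x != ord0); case: (x' != ord0); case: b; case: c => /=; lra.
split; [by []|split].
- move=> x x' y z z' b; rewrite /detbox3 !big_bool.
  by case: (x != ord0); case: (x' != ord0); case: b => /=; lra.
- move=> x x' y y' z c; rewrite /detbox3 !big_bool.
  by case: (x != ord0); case: (x' != ord0); case: c => /=; lra.
Qed.

Lemma detbox3_IAB_IAC (R : realFieldType) : IAB3 (@detbox3 R) + IAC3 (@detbox3 R) = 10.
Proof.
by rewrite /IAB3 /IAC3 /corrAB3 /corrAC3 !sum_ord3 /coefI !big_bool /detbox3 /=; lra.
Qed.

Lemma inord_o1 : (inord 1 : 'I_3) = o1. Proof. by apply/val_inj; rewrite /= inordK. Qed.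
Lemma inord_o2 : (inord 2 : 'I_3) = o2. Proof. by apply/val_inj; rewrite /= inordK. Qed.

Definition term_val (t : term) (x : obs -> bool) : int :=
  coefI t.1.2 t.2 * sgnb (x (term_obsA t)) * sgnb (x (term_obs2 t)).

Lemma term_val_sign t x : term_val t x = 1 \/ term_val t x = -1.
Proof.
rewrite /term_val /coefI.
by case: (_ <= _)%N; case: (x (term_obsA t)); case: (x (term_obs2 t)) => /=; by [left|right].
Qed.

Lemma sum_nat_indicator (I : finType) (A : {pred I}) (p : pred I) :
  \sum_(t in A) (p t : nat)%:Z = #|[set t in A | p t]|%:Z.
Proof.
rewrite (eq_bigr (fun t => (p t : nat)%:R)) => [|t _]; last by rewrite natz.
by rewrite -natr_sum -sum1dep_card big_mkcondr natz.
Qed.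

Lemma group_val_parity (T : {set term}) (x : obs -> bool) :
  group_val T x = #|T|%:Z - 2 * #|[set t in T | term_val t x == -1]|%:Z.
Proof.
rewrite /group_val (eq_bigr (fun t => 1 - 2 * (term_val t x == -1 : nat)%:Z)).
  rewrite sumrB -mulr_sumr (sum_nat_indicator _ (fun t => term_val t x == -1)).
  by rewrite sumr_const (natz #|T|).
by move=> t _; rewrite -/(term_val t x); case: (term_val_sign t x) => ->.
Qed.

Lemma group_max_star (T : {set term}) (m : int) (i : 'I_3) :
  (forall t, t \in T -> t.1.2 = i) -> is_group_max T m -> #|T|%:Z <= m.
Proof.
move=> star [_ m_max].
pose x : {ffun obs -> bool} := [ffun o : obs => if o.1 == ord0 then true else (o.2 <= i)%N].
have <- : group_val T x = #|T|%:Z; last exact: m_max.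
rewrite /group_val (eq_bigr (fun _ => 1)) => [|[[b r] c] /star /= ->].
  by rewrite sumr_const (natz #|T|).
rewrite /term_obsA /term_obs2 /= !ffunE /=.
by case: b; rewrite ?inord_o1 ?inord_o2 /= /coefI; case: (c <= i)%N.
Qed.

Definition Bcol (T : {set term}) (j : 'I_3) : {set 'I_3} := [set r | (false, r, j) \in T].

Definition shares_B_setting (T : {set term}) : bool := [exists j, 1 < #|Bcol T j|]%N.

(* Fix [B_j = +1] and each [A_r] to satisfy its term with [B_j] (or with [C_k] if there
   is none); of the two assignments differing in [C_k], both satisfy every term except
   the terms [<A_r C_k>] with [r] in [Bcol T j], which exactly one of them satisfies. *)
Lemma group_val_fixed_settings (T : {set term}) (j k : 'I_3) :
    (forall t, t \in T -> t.2 = if t.1.1 then k else j) ->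
  exists x1 x2 : {ffun obs -> bool},
    2 * #|T|%:Z - 2 * #|Bcol T j|%:Z <= group_val T x1 + group_val T x2.
Proof.
move=> settings.
pose xc (c : bool) : {ffun obs -> bool} := [ffun o : obs => if o.1 == ord0 then
   (if (false, o.2, j) \in T then (j <= o.2)%N else ((k <= o.2)%N == c))
   else if o.1 == o1 then true else c].
pose conflict (t : term) := t.1.1 && ((false, t.1.2, j) \in T).
exists (xc true), (xc false).
have term_avg t : t \in T ->
    term_val t (xc true) + term_val t (xc false) = if conflict t then 0 else 2.
  move: t => [[b r] col] Ht; have := settings _ Ht.
  rewrite /term_val /term_obsA /term_obs2 /conflict /= !ffunE /=.
  case: b Ht => Ht /= e_col; subst col; rewrite ?inord_o1 ?inord_o2 /=.
    by case: ((false, r, j) \in T); rewrite /coefI; case: (k <= r)%N; case: (j <= r)%N.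
  by rewrite Ht /coefI; case: (j <= r)%N.
have -> : group_val T (xc true) + group_val T (xc false)
    = 2 * #|T|%:Z - 2 * #|[set t in T | conflict t]|%:Z.
  rewrite /group_val -big_split /= (eq_bigr (fun t => 2 - 2 * (conflict t : nat)%:Z)).
    rewrite sumrB -mulr_sumr (sum_nat_indicator _ conflict) sumr_const.
    by rewrite -[2 *+ _]mulr_natr (natz #|T|).
  by move=> t Ht; rewrite term_avg //; case: (conflict t).
suff : (#|[set t in T | conflict t]| <= #|Bcol T j|)%N by lia.
rewrite -(@card_in_imset _ _ (fun t : term => t.1.2)).
  apply: subset_leq_card; apply/subsetP => r /imsetP [t].
  by move=> /setIdP[_ /andP[_ Bt]] ->; rewrite inE.
move=> t t'; rewrite !inE /conflict => /andP[Ht /andP[ACt _]] /andP[Ht' /andP[ACt' _]] e_row.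
move: (settings _ Ht) (settings _ Ht'); rewrite ACt ACt'.
by case: t t' ACt ACt' e_row {Ht Ht'} => [[[] ?] ?] [[[] ?] ?] //= _ _ -> -> ->.
Qed.

Lemma group_max_fixed_settings (T : {set term}) (m : int) (j k : 'I_3) :
    (forall t, t \in T -> t.2 = if t.1.1 then k else j) -> is_group_max T m ->
  #|T|%:Z - 2 * (shares_B_setting T : nat)%:Z <= m.
Proof.
move=> settings [[x0 m_val] m_max].
have [x1 [x2 avg]] := group_val_fixed_settings settings.
have := m_max x1; have := m_max x2.
have Bcol_le3 : (#|Bcol T j| <= 3)%N by apply: leq_trans (max_card _) _; rewrite card_ord.
have Bcol_small : ~~ shares_B_setting T -> (#|Bcol T j| <= 1)%N.
  by move/existsPn/(_ j); rewrite -leqNgt.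
move: m_val; rewrite group_val_parity => m_val.
move: avg Bcol_le3 Bcol_small m_val; case: (shares_B_setting T) => /=; lia.
Qed.

Lemma chordal_on_no_square (S : {set obs}) (a1 a2 x1 x2 : obs) :
    chordal_on S -> {subset [:: a1; x1; a2; x2] <= S} ->
    a1.1 = a2.1 -> x1.1 = x2.1 -> a1.1 != x1.1 -> a1 != a2 -> x1 != x2 ->
  False.
Proof.
move=> chS sub_S e_a e_x adj_ax n_a n_x.
have neq_of_adj u v : adjG u v -> u != v by apply: contraNneq => ->; rewrite /adjG eqxx.
have adj_xa : adjG x1 a1 by rewrite /adjG eq_sym.
have uniq_sq : uniq [:: a1; x1; a2; x2].
  rewrite /= !inE !negb_or n_a n_x (neq_of_adj _ _ adj_ax).
  by rewrite !neq_of_adj // /adjG -?e_a -?e_x // eq_sym.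
have cycle_sq : cycle adjG [:: a1; x1; a2; x2].
  by rewrite /= /adjG -e_a -e_x adj_ax eq_sym adj_ax.
have [i [j [lt_ij lt_j4 not_next not_last chord]]] := chS _ uniq_sq isT sub_S cycle_sq.
move: lt_ij lt_j4 not_next not_last chord.
by case: i => [|[|[|[|i]]]]; case: j => [|[|[|[|j]]]] //=; rewrite /adjG ?e_a ?e_x eqxx.
Qed.

Lemma obs_of_termA (T : {set term}) t : t \in T -> term_obsA t \in obs_of T.
Proof. by move=> Ht; apply/bigcupP; exists t => //; rewrite !inE eqxx. Qed.

Lemma obs_of_term2 (T : {set term}) t : t \in T -> term_obs2 t \in obs_of T.
Proof. by move=> Ht; apply/bigcupP; exists t => //; rewrite !inE eqxx orbT. Qed.

Lemma term_obs2_party (t : term) : (term_obs2 t).1 = if t.1.1 then o2 else o1.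
Proof. by rewrite /term_obs2; case: t.1.1; rewrite ?inord_o1 ?inord_o2. Qed.

Lemma exists_const_in (I : finType) (U : Type) (A : {pred I}) (f : I -> U) (u0 : U) :
  {in A &, forall i j, f i = f j} -> exists u, {in A, forall i, f i = u}.
Proof.
move=> f_const; case: (pickP A) => [i0 Ai0 | A0]; first by exists (f i0) => i Ai; apply: f_const.
by exists u0 => i; rewrite unfold_in A0.
Qed.

Lemma chordal_star_or_fixed_settings (T : {set term}) : chordal_on (obs_of T) ->
  (exists i, forall t, t \in T -> t.1.2 = i) \/
  (exists j k, forall t, t \in T -> t.2 = if t.1.1 then k else j).
Proof.
move=> chT.
case: (boolP [forall t1 in T, forall t2 in T, t1.1.2 == t2.1.2]) => [A_const | ].
  left; have [|i Ai] := @exists_const_in _ _ (mem T) (fun t => t.1.2) ord0.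
    by move=> t t' Ht Ht'; apply/eqP; move/forall_inP/(_ t Ht)/forall_inP: A_const; apply.
  by exists i.
case/forall_inPn => t1 Ht1 /forall_inPn [t2 Ht2 neq_A]; right.
have same_setting t t' : t \in T -> t' \in T -> t.1.1 = t'.1.1 -> t.2 = t'.2.
  move=> Ht Ht' e_party; have [//|n_setting] := eqVneq t.2 t'.2; exfalso.
  apply: (@chordal_on_no_square _ (term_obsA t1) (term_obsA t2) (term_obs2 t) (term_obs2 t') chT).
  - move=> o; rewrite !inE => /or4P[] /eqP ->;
      by [apply: obs_of_termA | apply: obs_of_term2].
  - by [].
  - by rewrite !term_obs2_party e_party.
  - by rewrite term_obs2_party; case: t.1.1.
  - by rewrite /term_obsA xpair_eqE negb_and neq_A orbT.
  - by rewrite /term_obs2 e_party xpair_eqE negb_and n_setting orbT.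
have [|j Bj] := @exists_const_in _ _ [pred t in T | ~~ t.1.1] (fun t => t.2) ord0.
  move=> t t' /andP[Ht Bt] /andP[Ht' Bt']; apply: same_setting => //.
  by move: Bt Bt'; case: t.1.1; case: t'.1.1.
have [|k Ck] := @exists_const_in _ _ [pred t in T | t.1.1] (fun t => t.2) ord0.
  move=> t t' /andP[Ht Ct] /andP[Ht' Ct']; apply: same_setting => //.
  by move: Ct Ct'; case: t.1.1; case: t'.1.1.
exists j, k => t Ht; case: ifP => party.
- by apply: Ck; rewrite inE Ht party.
- by apply: Bj; rewrite inE Ht party.
Qed.

Lemma chordal_group_max_ge (T : {set term}) (m : int) :
    chordal_on (obs_of T) -> is_group_max T m ->
  #|T|%:Z - 2 * (shares_B_setting T : nat)%:Z <= m.
Proof.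
move=> chT maxm; have [[i star] | [j [k settings]]] := chordal_star_or_fixed_settings chT.
- by have := group_max_star star maxm; case: (shares_B_setting T) => /=; lia.
- exact: group_max_fixed_settings settings maxm.
Qed.

(* Each group sharing a B setting owns two of the three terms <A_r B_j> of some column j. *)
Lemma card_shares_B_setting (Pt : {set {set term}}) : partition Pt [set: term] ->
  (#|[set T in Pt | shares_B_setting T]| <= 3)%N.
Proof.
move=> /and3P[_ trivPt _].
pose col (T : {set term}) := odflt ord0 [pick j | 1 < #|Bcol T j|]%N.
have col_shared T : shares_B_setting T -> (1 < #|Bcol T (col T)|)%N.
  by rewrite /col; case: pickP => [//|none] /existsP[j]; rewrite none.
rewrite -(@card_in_imset _ _ col); first by apply: leq_trans (max_card _) _; rewrite card_ord.
move=> T1 T2; rewrite !inE => /andP[PtT1 /col_shared sh1] /andP[PtT2 /col_shared sh2] e_col.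
apply/eqP; apply: contraT => neqT.
have disjT := trivIsetP trivPt T1 T2 PtT1 PtT2 neqT.
have disjB : Bcol T1 (col T1) :&: Bcol T2 (col T1) = set0.
  apply/setP => r; rewrite !inE; apply/negbTE/nandP.
  by case T1r: (_ \in T1); [right; rewrite (disjointFr disjT T1r) | left].
have := cardsU (Bcol T1 (col T1)) (Bcol T2 (col T1)); rewrite disjB cards0 subn0.
have : (#|Bcol T1 (col T1) :|: Bcol T2 (col T1)| <= 3)%N.
  by apply: leq_trans (max_card _) _; rewrite card_ord.
move: sh2; rewrite -e_col; lia.
Qed.

Lemma no_chordal_decomposition :
  ~ (exists (Pt : {set {set term}}) (m : {set term} -> int),
        partition Pt [set: term] /\
        (forall T, T \in Pt -> chordal_on (obs_of T)) /\
        (forall T, T \in Pt -> is_group_max T (m T)) /\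
        \sum_(T in Pt) m T = 10).
Proof.
move=> [Pt [m [partPt [chordal [maxm sum_m]]]]].
have : \sum_(T in Pt) (#|T|%:Z - 2 * (shares_B_setting T : nat)%:Z) <= \sum_(T in Pt) m T.
  by apply: ler_sum => T PtT; apply: chordal_group_max_ge; [apply: chordal | apply: maxm].
rewrite sum_m sumrB -mulr_sumr sum_nat_indicator.
have -> : \sum_(T in Pt) #|T|%:Z = 18.
  rewrite (eq_bigr (fun T : {set term} => #|T|%:R : int)) => [|T _]; last by rewrite natz.
  by rewrite -natr_sum -(card_partition partPt) cardsT !card_prod card_bool card_ord.
by have := card_shares_B_setting partPt; lia.
Qed.

Theorem proposition2 (R : realFieldType) :
  (* local bound *)
  (forall P : behav2 R, lhv2 P -> I2 P <= 5) /\
  (* maximal no-signaling value 9 *)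
  (forall P : behav2 R, nosig2 P -> I2 P <= 9) /\
  (exists P : behav2 R, nosig2 P /\ I2 P = 9) /\
  (* tight monogamy relation *)
  (forall P : behav3 R, nosig3 P -> IAB3 P + IAC3 P <= 10) /\
  (exists P : behav3 R, nosig3 P /\ IAB3 P + IAC3 P = 10) /\
  (* not obtainable from a chordal decomposition *)
  ~ (exists (Pt : {set {set term}}) (m : {set term} -> int),
        partition Pt [set: term] /\
        (forall T, T \in Pt -> chordal_on (obs_of T)) /\
        (forall T, T \in Pt -> is_group_max T (m T)) /\
        \sum_(T in Pt) m T = 10).
Proof.
split; first exact: lhv2_I2_le5.
split; first exact: nosig2_I2_le9.
split; first by exists (PRbox R); split; [exact: PRbox_nosig2 | exact: PRbox_I2].
split; first exact: nosig3_IAB_IAC_le10.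
split; first by exists (detbox3 R); split; [exact: detbox3_nosig3 | exact: detbox3_IAB_IAC].
exact: no_chordal_decomposition.
Qed.
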